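(* Let $T$ be a string of length $n$ and $1\le i\le j<n$, and suppose $\#\mathit{occ}_{T[i..j+1]}(\mathit{sqs}_{i,j+1})=2$. Then there are integers $p_l,p_s,q$ with $i\le p_l\le p_s\le q<j+1$ such that $T[p_s..q]=\mathit{sqs}_{i,j+1}$ and $T[p_l..q]=\mathit{lrs}_{i,j+1}$. Moreover, for these integers: (a) if there is no interval $[s',q+1]\in\mathsf{MUS}(T[i..j])$ (no MUS of $T[i..j]$ ending at $q+1$), then $[p_s,q+1]\in\mathsf{MUS}(T[i..j+1])$; (b) if there is no interval $[p_l-1,t']\in\mathsf{MUS}(T[i..j])$ (no MUS of $T[i..j]$ starting at $p_l-1$) and $p_l\ge i+1$, then $[p_l-1,q]\in\mathsf{MUS}(T[i..j+1])$.
   Context: $T[a..b]$ denotes the substring of $T$ from position $a$ to $b$. For strings $S,w$, $\#\mathit{occ}_S(w)$ is the number of positions at which $w$ occurs in $S$, with $\#\mathit{occ}_S(\varepsilon)=|S|+1$. A substring $w$ of $S$ is unique in $S$ if $\#\mathit{occ}_S(w)=1$ and repeating if $\#\mathit{occ}_S(w)\ge 2$. For $1\le i\le j\le n$, $\mathsf{MUS}(T[i..j])$ is the set of intervals $[s,t]$ (positions in $T$) with $i\le s\le t\le j$ such that $T[s..t]$ is unique in $T[i..j]$ and every proper substring of $T[s..t]$ (including the empty string) is repeating in $T[i..j]$. $\mathit{lrs}_{i,j}$ is the longest suffix of $T[i..j]$ occurring at least twice in $T[i..j]$ (possibly empty); $\mathit{sqs}_{i,j}$ is the shortest suffix of $T[i..j]$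 occurring at most twice in $T[i..j]$. *)

(* Strings are sequences over an eqType alphabet A;
   positions are 1-based as in the paper. *)
From mathcomp Require Import all_boot.
Set Implicit Arguments. Unset Strict Implicit. Unset Printing Implicit Defensive.

Section Strings.
Variable A : eqType.

(* T[a..b] : the substring from position a to position b (1-based, inclusive);
   empty when b < a. *)
Definition substr (T : seq A) (a b : nat) : seq A := take (b.+1 - a) (drop a.-1 T).

(* #occ_S(w): number of positions at which w occurs in S
   (for w = [::] this is size S + 1). *)
Definition occ (S w : seq A) : nat :=
  if size w <= size S then
    count (fun k => take (size w) (drop k S) == w) (iota 0 (size S - size w).+1)
  else 0.

(* lrs of S: longest suffix of S occurring at least twice in S (possibly empty).
   Suffixes of S are drop k S, k = 0..|S|; the smallest such k gives the longest. *)
Definition lrs (S : seq A) : seq A :=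
  drop (find (fun k => 2 <= occ S (drop k S)) (iota 0 (size S).+1)) S.

(* sqs of S: shortest suffix of S occurring at most twice in S.
   m ranges over suffix lengths 0..|S|; the smallest such m is taken. *)
Definition sqs (S : seq A) : seq A :=
  drop (size S - find (fun m => occ S (drop (size S - m) S) <= 2) (iota 0 (size S).+1)) S.

Definition isMUS (T : seq A) (i j s t : nat) : Prop :=
  let S := substr T i j in
  let w := substr T s t in
  [/\ i <= s, s <= t, t <= j,
      occ S w = 1 &
      forall u : seq A, infix u w -> u != w -> 2 <= occ S u].

End Strings.

From mathcomp Require Import all_boot zify.
Set Implicit Arguments. Unset Strict Implicit. Unset Printing Implicit Defensive.

(* The suffix lrs of T[i..j+1] contains sqs as a suffix, so it occurs at most, hence
   exactly, twice; its non-suffix occurrence [pl, q] ends at q <= j, and sqs sits at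
   [ps, q].
   (a) The only occurrences of sqs are at ps and at the end, so sqs followed by
   T[q+1] is unique.  If its suffix T[ps+1..q+1] were unique too, it would be unique
   in T[i..j]; shrinking it from the left as long as it stays unique yields a MUS of
   T[i..j] ending at q+1, because every proper suffix of T[ps+1..q] is a suffix of
   T[i..j+1] shorter than sqs, hence occurs at least three times in T[i..j+1].
   (b) T[pl-1] followed by lrs is unique, since a second occurrence would have to end
   the string and give a longer repeating suffix.  If its prefix T[pl-1..q] were
   unique, shrinking it from the right yields a MUS of T[i..j] starting at pl-1,
   because every prefix of lrs occurs at pl and inside the final copy of lrs,
   both within T[i..j]. *)

Section Occurrences.
Variable A : eqType.
Implicit Types S w u : seq A.

(* Positions are 0-based: [window S k l] is S[k+1..k+l] in the paper's 1-based notation. *)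
Definition window S k l := take l (drop k S).

Definition occurs_at S w k := (k + size w <= size S) && (window S k (size w) == w).

Lemma size_window S k l : k + l <= size S -> size (window S k l) = l.
Proof. by move=> kl; rewrite /window size_takel // size_drop; lia. Qed.

Lemma window_window S k n d l : d + l <= n ->
  window (window S k n) d l = window S (k + d) l.
Proof.
move=> dln; rewrite /window -[n](@subnK d); last by lia.
by rewrite -take_drop take_takel ?drop_drop 1?addnC //; lia.
Qed.

Lemma window_drop S n d l : window (drop n S) d l = window S (n + d) l.
Proof. by rewrite /window drop_drop addnC. Qed.

Lemma window_suffix S k l : k + l = size S -> window S k l = drop k S.
Proof. by move=> kl; rewrite /window take_oversize // size_drop; lia. Qed.

Lemma window_take S n k l : k + l <= n -> window (take n S) k l = window S k l.
Proof.
move=> kln; rewrite /window -[n](@subnK k); last by lia.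
by rewrite -take_drop take_takel //; lia.
Qed.

Lemma window_behead S k l : drop 1 (window S k l) = window S k.+1 l.-1.
Proof.
case: l => [|l]; first by rewrite /window !take0.
by rewrite /window -[k.+1]add1n -drop_drop; case: (drop k S) => //= x X; rewrite !drop0.
Qed.

Lemma window_belast S k l : k + l <= size S ->
  take (size (window S k l)).-1 (window S k l) = window S k l.-1.
Proof. by move=> kl; rewrite size_window // /window take_takel // leq_pred. Qed.

Lemma occE S w : occ S w = count (occurs_at S w) (iota 0 (size S).+1).
Proof.
rewrite /occ; case: leqP => [wS | Sw]; last first.
  rewrite (@eq_count _ _ pred0) ?count_pred0 // => k; apply/negbTE.
  by rewrite /occurs_at negb_and -ltnNge; apply/orP; left; lia.
rewrite -[(size S).+1](@subnKC (size S - size w).+1); last by lia.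
rewrite iotaD count_cat [X in _ = _ + X](_ : _ = 0) ?addn0.
  apply: eq_in_count => k; rewrite mem_iota => kw.
  by rewrite /occurs_at (_ : k + size w <= size S); last by lia.
apply/eqP; rewrite eqn0Ngt -has_count; apply/hasPn => k; rewrite mem_iota => kw.
by rewrite /occurs_at negb_and -ltnNge; apply/orP; left; lia.
Qed.

Lemma leq_size_occ S w (P : seq nat) :
  uniq P -> all (occurs_at S w) P -> size P <= occ S w.
Proof.
move=> uP /allP occP; rewrite occE -size_filter; apply: uniq_leq_size => // k kP.
rewrite mem_filter occP // mem_iota; have /andP[kS _] := occP k kP; lia.
Qed.

Lemma occ_leq_size S w (P : seq nat) :
  (forall k, occurs_at S w k -> k \in P) -> occ S w <= size P.
Proof.
move=> occP; rewrite occE -size_filter; apply: uniq_leq_size.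
  by rewrite filter_uniq // iota_uniq.
by move=> k; rewrite mem_filter => /andP[/occP].
Qed.

Lemma occ_shift S1 S2 w1 w2 d :
  (forall k, occurs_at S1 w1 k -> occurs_at S2 w2 (k + d)) -> occ S1 w1 <= occ S2 w2.
Proof.
move=> shift; pose P := filter (occurs_at S1 w1) (iota 0 (size S1).+1).
have -> : occ S1 w1 = size (map (addn^~ d) P) by rewrite size_map occE size_filter.
apply: leq_size_occ.
  by rewrite map_inj_uniq ?filter_uniq ?iota_uniq // => x y /addIn.
by apply/allP => x /mapP [k]; rewrite mem_filter => /andP[/shift occk _] ->.
Qed.

Lemma occ_gt0 S w k : occurs_at S w k -> 0 < occ S w.
Proof. by move=> occk; apply: (@leq_size_occ _ _ [:: k]) => //=; rewrite occk. Qed.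

Lemma occ_gt1 S w k l : occurs_at S w k -> occurs_at S w l -> k != l -> 1 < occ S w.
Proof.
move=> occk occl kl.
by apply: (@leq_size_occ _ _ [:: k; l]); rewrite /= ?inE ?kl ?occk ?occl.
Qed.

Lemma occ_eq1 S w k : occurs_at S w k -> (forall l, occurs_at S w l -> l = k) -> occ S w = 1.
Proof.
move=> occk only_k; apply/eqP; rewrite eqn_leq (occ_gt0 occk) andbT.
by apply: (@occ_leq_size _ _ [:: k]) => l /only_k ->; rewrite inE.
Qed.

Lemma occ_gt1_neq1 S w k : occurs_at S w k -> occ S w != 1 -> 1 < occ S w.
Proof. by move=> /occ_gt0; case: (occ S w) => [|[|n]]. Qed.

Lemma occ_le2_cases S w k l p : occ S w <= 2 ->
  occurs_at S w k -> occurs_at S w l -> k != l -> occurs_at S w p -> p = k \/ p = l.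
Proof.
move=> occ_le2 occk occl kl occp.
case: (eqVneq p k) => [|pk]; first by left.
case: (eqVneq p l) => [|pl]; first by right.
have : size [:: k; l; p] <= occ S w.
  apply: leq_size_occ; rewrite /= ?occk ?occl ?occp ?andbT //.
  by rewrite !inE negb_or kl eq_sym pk eq_sym pl.
by move=> /leq_trans /(_ occ_le2).
Qed.

Lemma occ_gt1_other S w k : 1 < occ S w -> occurs_at S w k ->
  exists2 l, l != k & occurs_at S w l.
Proof.
move=> occ_gt1 occk.
have [/hasP [l _ /andP[lk occl]] | /hasPn only_k] :=
  boolP (has (fun l => (l != k) && occurs_at S w l) (iota 0 (size S).+1)).
  by exists l.
suff : occ S w <= size [:: k] by rewrite /=; lia.
apply: occ_leq_size => l occl; rewrite inE; apply: contraT => lk.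
have /andP[lS _] := occl.
by have := only_k l; rewrite mem_iota lk occl /=; apply; lia.
Qed.

Lemma occurs_at_window S k l : k + l <= size S -> occurs_at S (window S k l) k.
Proof. by move=> kl; rewrite /occurs_at size_window // kl eqxx. Qed.

Lemma occurs_at_drop S k : k <= size S -> occurs_at S (drop k S) k.
Proof.
by move=> kS; rewrite -(@window_suffix _ _ (size S - k)) ?occurs_at_window; lia.
Qed.

Lemma occurs_at_sub S w k d l : occurs_at S w k -> d + l <= size w ->
  occurs_at S (window w d l) (k + d).
Proof.
move=> /andP[kw /eqP wk] dlw; rewrite /occurs_at size_window //.
by rewrite -wk window_window // addnC; apply/andP; split; first lia.
Qed.

Lemma occurs_at_subwindow S a n k d l : occurs_at S (window S a n) k ->
  a + n <= size S -> d + l <= n -> occurs_at S (window S (a + d) l) (k + d).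
Proof.
move=> occk anS dln; rewrite -(@window_window _ _ n) //.
by apply: occurs_at_sub; rewrite ?size_window.
Qed.

Lemma occurs_at_take S n w k : occurs_at S w k -> k + size w <= n ->
  occurs_at (take n S) w k.
Proof.
move=> /andP[kw /eqP wk] kwn; rewrite /occurs_at window_take // wk eqxx andbT.
by rewrite size_take_min leq_min kwn.
Qed.

Lemma occurs_at_take_inv S n w k : occurs_at (take n S) w k -> occurs_at S w k.
Proof.
move=> /andP[]; rewrite size_take_min leq_min => /andP[kwn kwS] /eqP wk.
by rewrite /occurs_at kwS -(window_take _ kwn) wk eqxx.
Qed.

Lemma occ_take S n w : occ (take n S) w <= occ S w.
Proof. by apply: (@occ_shift _ _ _ _ 0) => k; rewrite addn0; apply: occurs_at_take_inv. Qed.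

Lemma occ_window_take S n a l : a + l <= n -> a + l <= size S ->
  occ S (window S a l) <= 1 -> occ (take n S) (window (take n S) a l) = 1.
Proof.
move=> aln alS occ_le1; rewrite window_take //; apply/eqP.
rewrite eqn_leq (leq_trans (occ_take _ _ _) occ_le1) (@occ_gt0 _ _ a) //.
by apply: occurs_at_take; rewrite ?occurs_at_window ?size_window.
Qed.

Lemma occ_take_pred S w : occ S w <= (occ (take (size S).-1 S) w).+1.
Proof.
pose S' := take (size S).-1 S.
pose P := filter (occurs_at S' w) (iota 0 (size S').+1).
have -> : (occ S' w).+1 = size ((size S - size w) :: P) by rewrite /= occE -size_filter.
apply: occ_leq_size => k occk; rewrite inE mem_filter mem_iota.
have /andP[kwS _] := occk.
case: (leqP (k + size w) (size S).-1) => kwS'; last by apply/orP; left; apply/eqP; lia.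
by rewrite occurs_at_take // size_take_min; apply/orP; right; lia.
Qed.

Lemma occ_infix S u w : infix u w -> occ S w <= occ S u.
Proof.
move=> /infixP [p [r ->]]; apply: (@occ_shift _ _ _ _ (size p)) => k occk.
have -> : u = window (p ++ u ++ r) (size p) (size u).
  by rewrite /window drop_size_cat // take_size_cat.
by apply: occurs_at_sub; rewrite // !size_cat; lia.
Qed.

Lemma occ_self S : occ S S = 1.
Proof.
apply: (@occ_eq1 _ _ 0); first by rewrite /occurs_at /window drop0 take_size eqxx leqnn.
by move=> l /andP[lS _]; lia.
Qed.

Lemma occ_nil S : occ S [::] = (size S).+1.
Proof.
rewrite /occ leq0n subn0 (@eq_count _ _ predT) ?count_predT ?size_iota //.
by move=> k; rewrite take0.
Qed.

Lemma infix_proper u w : infix u w -> u != w ->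
  infix u (drop 1 w) \/ infix u (take (size w).-1 w).
Proof.
move=> /infixP [[|x p] [r ->]] uw; last by left; rewrite /= drop0 infix_infix.
case/lastP: r uw => [|r y] uw; first by rewrite /= cats0 eqxx in uw.
right; rewrite /= size_cat size_rcons -cats1 catA take_size_cat ?prefix_infix //.
by rewrite size_cat; lia.
Qed.

Definition minimal_unique S w :=
  occ S w = 1 /\ forall u, infix u w -> u != w -> 1 < occ S u.

Definition mus_window S k l := [/\ 0 < l, k + l <= size S & minimal_unique S (window S k l)].

Definition mus_starts S k := exists l, mus_window S k l.

Definition mus_ends S e := exists k l, k + l = e.+1 /\ mus_window S k l.

Lemma mus_window_intro S k l : 0 < l -> k + l <= size S -> occ S (window S k l) = 1 ->
  1 < occ S (window S k.+1 l.-1) -> 1 < occ S (window S k l.-1) -> mus_window S k l.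
Proof.
move=> l_gt0 klS uniq_kl rep_behead rep_belast; split=> //; split=> // u uw.
move=> /(infix_proper uw) [] /(occ_infix S) /(leq_trans _); apply.
  by rewrite window_behead.
by rewrite window_belast.
Qed.

Lemma mus_starts_shrink S k n : 0 < n -> k + n <= size S -> occ S (window S k n) = 1 ->
  (forall l, l < n -> 1 < occ S (window S k.+1 l)) -> mus_starts S k.
Proof.
move=> n_gt0 knS uniq_n rep_tails.
pose P l := (l <= n) && (occ S (window S k l) == 1).
have [|l /andP[ln /eqP uniq_l] l_min] := ex_minnP (ex_intro P n _).
  by rewrite /P leqnn uniq_n eqxx.
have l_gt0 : 0 < l.
  by move: uniq_l; case: (l) => //; rewrite /window take0 occ_nil; lia.
exists l; apply: mus_window_intro => //; first lia.
  by apply: rep_tails; lia.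
apply: (@occ_gt1_neq1 _ _ k); first by apply: occurs_at_window; lia.
by apply/eqP => uniq_pred; have := l_min l.-1; rewrite /P uniq_pred eqxx andbT; lia.
Qed.

Lemma mus_ends_shrink S k n : 0 < n -> k + n <= size S -> occ S (window S k n) = 1 ->
  (forall d, d < n -> 1 < occ S (window S (k + d) (n - d).-1)) -> mus_ends S (k + n).-1.
Proof.
move=> n_gt0 knS uniq_n rep_heads.
pose P d := (d < n) && (occ S (window S (k + d) (n - d)) == 1).
have exP : exists d, P d by exists 0; rewrite /P n_gt0 addn0 subn0 uniq_n eqxx.
have ubP d : P d -> d <= n by move=> /andP[dn _]; lia.
have [d /andP[dn /eqP uniq_d] d_max] := ex_maxnP exP ubP.
exists (k + d), (n - d); split; first lia.
apply: mus_window_intro => //; try lia; last exact: rep_heads.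
rewrite -addnS -subnS; have [dn' | dn'] := ltnP d.+1 n.
  apply: (@occ_gt1_neq1 _ _ (k + d.+1)); first by apply: occurs_at_window; lia.
  by apply/eqP => uniq_succ; have := d_max d.+1; rewrite /P uniq_succ eqxx andbT; lia.
by rewrite (_ : n - d.+1 = 0) ?/window ?take0 ?occ_nil; lia.
Qed.

Lemma drop_size_drop S k : drop (size S - size (drop k S)) S = drop k S.
Proof.
rewrite size_drop; case: (leqP k (size S)) => kS; first by rewrite subKn.
by rewrite !drop_oversize //; lia.
Qed.

Lemma sqs_suffix S : sqs S = drop (size S - size (sqs S)) S.
Proof. by rewrite /sqs drop_size_drop. Qed.

Lemma lrs_suffix S : lrs S = drop (size S - size (lrs S)) S.
Proof. by rewrite /lrs drop_size_drop. Qed.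

Lemma occ_short_suffix S l : l < size (sqs S) -> 2 < occ S (drop (size S - l) S).
Proof.
pose P m := occ S (drop (size S - m) S) <= 2.
rewrite /sqs -/P size_drop => lf.
have lfind : l < find P (iota 0 (size S).+1) by lia.
have := before_find 0 lfind; rewrite nth_iota ?add0n; last by lia.
by rewrite /P ltnNge => ->.
Qed.

Lemma occ_lrs S : 0 < size S -> 1 < occ S (lrs S).
Proof.
move=> S_gt0; pose P k := 1 < occ S (drop k S).
have hasP : has P (iota 0 (size S).+1).
  apply/hasP; exists (size S); first by rewrite mem_iota; lia.
  by rewrite /P drop_size occ_nil.
have := nth_find 0 hasP; rewrite nth_iota; last by move: hasP; rewrite has_find size_iota.
by rewrite /lrs /P add0n.
Qed.

Lemma occ_long_suffix S k : k < size S - size (lrs S) -> occ S (drop k S) < 2.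
Proof.
pose P k := 1 < occ S (drop k S).
rewrite /lrs -/P size_drop => kg.
have kfind : k < find P (iota 0 (size S).+1) by lia.
have := before_find 0 kfind; rewrite nth_iota ?add0n; last by lia.
by rewrite /P => /negbT; lia.
Qed.

End Occurrences.

Section SqsOccursTwice.
Variable A : eqType.
Variable S : seq A.
Hypothesis S_gt1 : 1 < size S.
Hypothesis occ_sqs : occ S (sqs S) = 2.

Local Notation f := (size (sqs S)).
Local Notation L := (size (lrs S)).
Local Notation S' := (take (size S).-1 S).

Lemma sqs_gt0 : 0 < f.
Proof.
rewrite lt0n; apply/eqP => f0.
by move: occ_sqs; rewrite sqs_suffix f0 subn0 drop_size occ_nil; lia.
Qed.

Lemma sqs_le_size : f <= size S.
Proof. by rewrite sqs_suffix size_drop leq_subr. Qed.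

Lemma lrs_le_size : L <= size S.
Proof. by rewrite lrs_suffix size_drop leq_subr. Qed.

Lemma sqs_le_lrs : f <= L.
Proof.
rewrite leqNgt; apply/negP => Lf; have := sqs_le_size.
by have := @occ_long_suffix _ S (size S - f); rewrite -sqs_suffix occ_sqs; lia.
Qed.

Lemma sqs_drop_lrs : sqs S = drop (L - f) (lrs S).
Proof.
have fL := sqs_le_lrs; have LS := lrs_le_size.
by rewrite {2}lrs_suffix drop_drop {1}sqs_suffix; congr drop; lia.
Qed.

Lemma occ_lrs2 : occ S (lrs S) = 2.
Proof.
apply/eqP; rewrite eqn_leq occ_lrs ?andbT; last by lia.
by rewrite -occ_sqs; apply: occ_infix; rewrite sqs_drop_lrs infix_drop.
Qed.

Lemma lrs_occurs_suffix : occurs_at S (lrs S) (size S - L).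
Proof. by rewrite {1}lrs_suffix occurs_at_drop // leq_subr. Qed.

Lemma lrs_occurs_before_suffix : exists2 k, occurs_at S (lrs S) k & k + L < size S.
Proof.
have [|k k_ne occ_k] := occ_gt1_other _ lrs_occurs_suffix; first by rewrite occ_lrs2.
exists k => //; have /andP[kL _] := occ_k; lia.
Qed.

Variable k : nat.
Hypothesis lrs_at_k : occurs_at S (lrs S) k.
Hypothesis k_lt : k + L < size S.

Lemma window_lrs : window S k L = lrs S.
Proof. by case/andP: lrs_at_k => _ /eqP. Qed.

Lemma window_sqs : window S (k + (L - f)) f = sqs S.
Proof.
have fL := sqs_le_lrs.
rewrite -(@window_window _ S k L) ?window_lrs; last by lia.
by rewrite window_suffix ?[RHS]sqs_drop_lrs //; lia.
Qed.

Lemma window_sqs_tail d : d <= f ->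
  window S (k + (L - f) + d) (f - d) = drop (size S - (f - d)) S.
Proof.
have fS := sqs_le_size; have fL := sqs_le_lrs.
move=> df; rewrite -(@window_window _ S _ f) ?window_sqs; last by lia.
by rewrite {1}sqs_suffix window_drop window_suffix; [congr drop |]; lia.
Qed.

Lemma sqs_occurrences p : occurs_at S (sqs S) p -> p = k + (L - f) \/ p = size S - f.
Proof.
have fS := sqs_le_size; have fL := sqs_le_lrs.
apply: occ_le2_cases; first by rewrite occ_sqs.
- by rewrite -{1}window_sqs occurs_at_window //; lia.
- by rewrite {1}sqs_suffix occurs_at_drop // leq_subr.
- by apply/eqP; lia.
Qed.

Lemma mus_sqs_extension : ~ mus_ends S' (k + L) -> mus_window S (k + (L - f)) f.+1.
Proof.
have f_gt0 := sqs_gt0; have fL := sqs_le_lrs; have fS := sqs_le_size.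
move=> no_mus_end; set p := k + (L - f).
apply: mus_window_intro => //; first lia.
- apply: (occ_eq1 (k:=p)) => [|q occ_q]; first by apply: occurs_at_window; lia.
  have := occurs_at_subwindow (d:=0) (l:=f) occ_q; rewrite !addn0 window_sqs.
  case/(_ _ _)/sqs_occurrences => //; [lia | move=> q_end].
  by case/andP: occ_q; rewrite size_window; lia.
- rewrite /= ltnNge; apply/negP => occ_le1.
  have [inside | at_end] := ltnP (k + L).+1 (size S); last first.
    have sqs_next : window S p.+1 f = sqs S.
      by rewrite {2}sqs_suffix window_suffix; [congr drop |]; lia.
    by move: occ_le1; rewrite sqs_next occ_sqs.
  apply: no_mus_end; rewrite (_ : k + L = (p.+1 + f).-1); last by lia.
  apply: mus_ends_shrink => //; first by rewrite size_take_min; lia.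
    by apply: occ_window_take; lia.
  move=> d df; rewrite window_take; last by lia.
  rewrite addSnnS -subnS window_sqs_tail; last by lia.
  have := occ_take_pred S (drop (size S - (f - d.+1)) S).
  by have := occ_short_suffix (_ : f - d.+1 < f); lia.
- by rewrite /= window_sqs occ_sqs.
Qed.

Lemma mus_lrs_extension : 0 < k -> ~ mus_starts S' k.-1 -> mus_window S k.-1 L.+1.
Proof.
have f_gt0 := sqs_gt0; have fL := sqs_le_lrs.
move=> k_gt0 no_mus_start; have kS := prednK k_gt0.
have k_ne_suffix : k != size S - L by apply/eqP; lia.
apply: mus_window_intro => //; first lia.
- apply: (occ_eq1 (k:=k.-1)) => [|q occ_q]; first by apply: occurs_at_window; lia.
  have := occurs_at_subwindow (d:=1) (l:=L) occ_q; rewrite addn1 kS window_lrs.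
  case/(_ _ _)/(occ_le2_cases _ lrs_at_k lrs_occurs_suffix k_ne_suffix) => //;
    [by rewrite occ_lrs2 | lia | lia | move=> q_suffix].
  have [qL window_q] := andP occ_q; rewrite size_window in qL window_q; last by lia.
  have suffix_q : window S k.-1 L.+1 = drop q S.
    by rewrite -(eqP window_q) window_suffix //; lia.
  have rep : 1 < occ S (window S k.-1 L.+1).
    by apply: (occ_gt1 (k:=k.-1) (l:=q)) => //; [apply: occurs_at_window | apply/eqP]; lia.
  by have := occ_long_suffix (S:=S) (k:=q); rewrite -suffix_q; lia.
- by rewrite /= kS window_lrs occ_lrs2.
- rewrite /= ltnNge; apply/negP => occ_le1; apply: no_mus_start.
  apply: (mus_starts_shrink (n:=L)); first lia; first by rewrite size_take_min; lia.
    by apply: occ_window_take; lia.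
  move=> l lL; rewrite kS window_take; last by lia.
  apply: (occ_gt1 (k:=k) (l:=size S - L)) => //.
    by apply: occurs_at_take; rewrite ?occurs_at_window ?size_window; lia.
  apply: occurs_at_take; last by rewrite size_window; lia.
  have := occurs_at_subwindow (d:=0) (l:=l) (_ : occurs_at S (window S k L) (size S - L)).
  by rewrite !addn0 window_lrs; apply; rewrite ?lrs_occurs_suffix; lia.
Qed.

End SqsOccursTwice.

Lemma substr_window (A : eqType) (T : seq A) i j a l t : 0 < i ->
  t.+1 = i + a + l -> a + l <= j.+1 - i -> substr T (i + a) t = window (substr T i j) a l.
Proof.
move=> i_gt0 t_end alj; rewrite /substr /window -[j.+1 - i](@subnK a); last by lia.
by rewrite -take_drop take_takel ?drop_drop; [congr (take _ (drop _ _)) | ]; lia.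
Qed.

Lemma isMUS_mus_window (A : eqType) (T : seq A) i j a l t : 0 < i ->
  t.+1 = i + a + l -> mus_window (substr T i j) a l -> isMUS T i j (i + a) t.
Proof.
move=> i_gt0 t_end [l_gt0 alS [uniq_w rep_w]].
have alj : a + l <= j.+1 - i by move: alS; rewrite size_take_min; lia.
by rewrite /isMUS (substr_window _ i_gt0 t_end alj); split; try lia.
Qed.

Theorem lemma6 (A : eqType) (T : seq A) (i j : nat) :
  1 <= i -> i <= j -> j < size T ->
  occ (substr T i j.+1) (sqs (substr T i j.+1)) = 2 ->
  exists pl ps q : nat,
    i <= pl /\ pl <= ps /\ ps <= q /\ q < j.+1 /\
    substr T ps q = sqs (substr T i j.+1) /\
    substr T pl q = lrs (substr T i j.+1) /\
    ((~ exists s', isMUS T i j s' q.+1) -> isMUS T i j.+1 ps q.+1) /\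
    ((~ exists t', isMUS T i j pl.-1 t') -> i.+1 <= pl -> isMUS T i j.+1 pl.-1 q).
Proof.
move=> i_gt0 ij jT occ_sqs; set S := substr T i j.+1 in occ_sqs *.
have S_size : size S = j.+2 - i by rewrite size_takel // size_drop; lia.
have S'E : substr T i j = take (size S).-1 S.
  by rewrite S_size take_takel; [congr take | ]; lia.
have S_gt1 : 1 < size S by lia.
have fL := sqs_le_lrs S_gt1 occ_sqs; have f_gt0 := sqs_gt0 S_gt1 occ_sqs.
have [k lrs_k k_lt] := lrs_occurs_before_suffix S_gt1 occ_sqs.
have ext_sqs := mus_sqs_extension S_gt1 occ_sqs lrs_k k_lt.
have ext_lrs := mus_lrs_extension S_gt1 occ_sqs lrs_k k_lt.
set f := size (sqs S) in fL f_gt0 ext_sqs *.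
set L := size (lrs S) in fL k_lt ext_sqs ext_lrs *.
exists (i + k), (i + (k + (L - f))), (i + k + L).-1.
do 4!(split; first lia).
split; first by rewrite (@substr_window _ T i j.+1 (k + (L - f)) f) ?window_sqs //; lia.
split; first by rewrite (@substr_window _ T i j.+1 k L) ?addnA ?window_lrs //; lia.
split.
  move=> no_mus_end; apply: (isMUS_mus_window (l:=f.+1) i_gt0 _ (ext_sqs _)); first lia.
  move=> [a [n [an mus_an]]]; apply: no_mus_end; exists (i + a).
  by apply: (isMUS_mus_window (l:=n)); rewrite ?S'E //; lia.
move=> no_mus_start ik; have k_gt0 : 0 < k by lia.
rewrite (_ : (i + k).-1 = i + k.-1) in no_mus_start *; last by lia.
apply: (isMUS_mus_window (l:=L.+1) i_gt0 _ (ext_lrs k_gt0 _)); first lia.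
move=> [n mus_n]; apply: no_mus_start; exists (i + k.-1 + n).-1.
by apply: (isMUS_mus_window (l:=n)); rewrite ?S'E //; lia.
Qed.
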